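(* Let $G=M_{27}=\langle a,b\mid a^{9}=b^3=e,\ b^{-1}ab=a^{4}\rangle$ and let $\mathcal{A}$ be the $S$-ring over $G$ with basic sets $Z_0=\{e\}$, $Z_1=\{a^3b,\ a^6b^2\}$, $Z_2=\{a,\ a^3,\ a^6,\ a^8,\ a^4b^2,\ a^7b,\ a^8b,\ a^8b^2\}$, $Z_3=G\setminus(Z_0\cup Z_1\cup Z_2)$. Then $\mathcal{A}$ is not schurian.
   Context: For $X\subseteq G$, $\underline{X}=\sum_{x\in X}x\in\mathbb{Z}G$. A subring $\mathcal{A}$ of $\mathbb{Z}G$ is an $S$-ring over $G$ with basic sets forming a partition $\mathcal{S}(\mathcal{A})$ of $G$ if $\{e\}\in\mathcal{S}(\mathcal{A})$, $X\in\mathcal{S}(\mathcal{A})\Rightarrow X^{-1}\in\mathcal{S}(\mathcal{A})$, and $\mathcal{A}=\mathrm{Span}_{\mathbb{Z}}\{\underline{X}: X\in\mathcal{S}(\mathcal{A})\}$ (the span of $\underline{Z_0},\dots,\underline{Z_3}$ is indeed closed under multiplication). Let $G_{right}=\{x\mapsto xg: g\in G\}$. An $S$-ring $\mathcal{A}$ over $G$ is schurian if there is a permutation group $\Gamma$ with $G_{right}\leq\Gamma\leq\mathrm{Sym}(G)$ such that the basic sets of $\mathcal{A}$ are exactly the orbits on $G$ of the stabilizer $\Gamma_e$ of $e$ in $\Gamma$. *)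

From HB Require Import structures.
From mathcomp Require Import all_boot all_order all_fingroup.
Set Implicit Arguments. Unset Strict Implicit. Unset Printing Implicit Defensive.



(* Model of G = M_27 = <a,b | a^9 = b^3 = e, b^-1 a b = a^4>:
   the pair (i, j) : 'I_9 * 'I_3 stands for a^i b^j.
   Since b a^k = a^(7k) b, the product is
   (a^i b^j)(a^k b^l) = a^(i + 7^j k) b^(j + l). *)
Definition M27 : finType := ('I_9 * 'I_3)%type.

Definition elt (i j : nat) : M27 := (inord i, inord j).

Definition m27_mul (x y : M27) : M27 :=
  elt ((((x.1 : nat) + 7 ^ (x.2 : nat) * (y.1 : nat)) %% 9)%N)
      (((x.2 : nat) + (y.2 : nat)) %% 3).

Definition m27_e : M27 := elt 0 0.
Definition m27_a : M27 := elt 1 0.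
Definition m27_b : M27 := elt 0 1.

Lemma m27_rel : m27_mul (m27_mul (elt 0 2) m27_a) m27_b = elt 4 0.
Proof. by rewrite /m27_mul /elt /=; congr (_, _); apply: val_inj; rewrite /= !inordK. Qed.

Definition schurian (T : finType) (mul : T -> T -> T) (e : T)
    (S : {set {set T}}) : Prop :=
  exists Gamma : {group {perm T}},
    (forall g : T, exists2 s : {perm T}, s \in Gamma & forall x, s x = mul x g)
    /\ S = orbit 'P 'C_Gamma[e | 'P]%g @: [set: T].

Definition Z0 : {set M27} := [set m27_e].
Definition Z1 : {set M27} := [set elt 3 1; elt 6 2].
Definition Z2 : {set M27} :=
  [set elt 1 0; elt 3 0; elt 6 0; elt 8 0; elt 4 2; elt 7 1; elt 8 1; elt 8 2].
Definition Z3 : {set M27} := ~: (Z0 :|: Z1 :|: Z2).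

Definition SA : {set {set M27}} := [set Z0; Z1; Z2; Z3].

From mathcomp Require Import all_boot all_order all_fingroup.

Set Implicit Arguments. Unset Strict Implicit. Unset Printing Implicit Defensive.

(* If the partition were schurian with group Gamma, every element of Gamma
   would preserve each basic relation {(x, d x) : d in X}, X a basic set: for
   s in Gamma, conjugating s by right translations gives an element of the
   stabilizer of e, which maps X to itself.  Since b and ab both lie in Z3,
   some g in Gamma_e sends b to ab.  A finite search then shows that no map
   fixing e and sending b to ab can preserve the basic relations on four
   suitable points e, b, b^2, y. *)

Definition basic_rel (T : Type) (mul : T -> T -> T) (B : {pred T}) (x y : T) :=
  exists2 d, d \in B & mul d x = y.

Section StabilizerOrbits.

Variables (T : finType) (mul : T -> T -> T) (e : T).
Hypothesis mul1x : left_id e mul.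
Variable Gamma : {group {perm T}}.
Hypothesis right_transl :
  forall g : T, exists2 r : {perm T}, r \in Gamma & forall x, r x = mul x g.

Local Notation Stab := 'C_Gamma[e | 'P]%g.

Lemma basic_rel_orbit_perm s d x y :
    s \in Gamma -> basic_rel mul (orbit 'P Stab d) x y ->
  basic_rel mul (orbit 'P Stab d) (s x) (s y).
Proof.
move=> sG [d' d'O <-{y}].
have [r1 r1G r1E] := right_transl x.
have [r2 r2G r2E] := right_transl (s x).
pose g := (r1 * s * r2^-1)%g.
have gE u : g u = r2^-1%g (s (mul u x)) by rewrite !permM r1E.
have gStab : g \in Stab.
  have gG : g \in Gamma by rewrite !groupM ?groupV.
  rewrite inE gG /=; apply/astab1P.
  by rewrite /= apermE gE mul1x -[s x]mul1x -r2E permK.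
exists (g d'); last by rewrite -r2E gE permKV.
by apply: orbit_trans d'O; exact: (mem_orbit 'P d' gStab).
Qed.

Lemma schurian_basic_rel_perm (S : {set {set T}}) s B x y :
    S = orbit 'P Stab @: [set: T] -> s \in Gamma -> B \in S ->
  basic_rel mul B x y -> basic_rel mul B (s x) (s y).
Proof. by move=> -> sG /imsetP[d _ ->]; exact: basic_rel_orbit_perm. Qed.

Lemma schurian_block_transitive (S : {set {set T}}) B x y :
    S = orbit 'P Stab @: [set: T] -> B \in S -> x \in B -> y \in B ->
  exists2 g, g \in Stab & g x = y.
Proof.
move=> -> /imsetP[d _ ->] xO yO.
have /orbitP[g gStab <-] : y \in orbit 'P Stab x.
  by apply: orbit_trans yO _; rewrite orbit_sym.
by exists g.
Qed.

End StabilizerOrbits.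

(* Elements of M27 are built with [inord], which goes through the opaque
   [idP], so finite computations are carried out on these nat-pair codes. *)
Definition code (x : M27) : nat * nat := (x.1 : nat, x.2 : nat).

Lemma code_inj : injective code.
Proof. by move=> [i j] [k l] [/val_inj -> /val_inj ->]. Qed.

Lemma code_elt i j : i < 9 -> j < 3 -> code (elt i j) = (i, j).
Proof. by move=> lti ltj; rewrite /code /= !inordK. Qed.

Lemma eq_elt x i j : i < 9 -> j < 3 -> (x == elt i j) = (code x == (i, j)).
Proof. by move=> lti ltj; rewrite -code_elt // (inj_eq code_inj). Qed.

Definition mul_code (p q : nat * nat) : nat * nat :=
  ((p.1 + 7 ^ p.2 * q.1) %% 9, (p.2 + q.2) %% 3).

Lemma code_mul x y : code (m27_mul x y) = mul_code (code x) (code y).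
Proof. by rewrite code_elt ?ltn_pmod. Qed.

Lemma m27_mul1x : left_id m27_e m27_mul.
Proof.
move=> x; apply: code_inj; rewrite code_mul code_elt //.
by case: x => [[i lti] [j ltj]]; rewrite /mul_code /code /= mul1n !modn_small.
Qed.

Definition codes : seq (nat * nat) := [seq (i, j) | i <- iota 0 9, j <- iota 0 3].

Lemma mem_codes p : (p \in codes) = (p.1 < 9) && (p.2 < 3).
Proof.
case: p => i j; apply/allpairsP/andP => [[[k l] []]|[lti ltj]].
  by rewrite !mem_iota /= => ltk ltl [-> ->].
by exists (i, j); rewrite !mem_iota.
Qed.

Lemma code_codes x : code x \in codes.
Proof. by rewrite mem_codes !ltn_ord. Qed.

Lemma code_elt_codes p : p \in codes -> code (elt p.1 p.2) = p.
Proof. by case: p => i j; rewrite mem_codes => /andP[lti ltj]; rewrite code_elt. Qed.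

Definition Z0c : seq (nat * nat) := [:: (0, 0)].
Definition Z1c : seq (nat * nat) := [:: (3, 1); (6, 2)].
Definition Z2c : seq (nat * nat) :=
  [:: (1, 0); (3, 0); (6, 0); (8, 0); (4, 2); (7, 1); (8, 1); (8, 2)].
Definition Z3c : seq (nat * nat) := [seq p <- codes | p \notin Z0c ++ Z1c ++ Z2c].

Lemma mem_Z0 x : (x \in Z0) = (code x \in Z0c).
Proof. by rewrite !inE eq_elt. Qed.

Lemma mem_Z1 x : (x \in Z1) = (code x \in Z1c).
Proof. by rewrite !inE !eq_elt. Qed.

Lemma mem_Z2 x : (x \in Z2) = (code x \in Z2c).
Proof. by rewrite !inE !eq_elt // -!orbA. Qed.

Lemma mem_Z3 x : (x \in Z3) = (code x \in Z3c).
Proof.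
by rewrite in_setC in_setU (in_setU x Z0) /Z3c mem_filter code_codes !mem_cat
  -mem_Z0 -mem_Z1 -mem_Z2 andbT orbA.
Qed.

Definition SA_codes : seq (seq (nat * nat)) := [:: Z0c; Z1c; Z2c; Z3c].

Definition rel_code (c : seq (nat * nat)) (p q : nat * nat) : bool :=
  has (fun d => mul_code d p == q) c.

Definition compat_code (p p' q q' : nat * nat) : bool :=
  all (fun c => rel_code c p q ==> rel_code c p' q') SA_codes.

(* (0, 0), (0, 1), (1, 1), (0, 2) code e, b, ab and b^2: whatever the image v
   of b^2, some point y has no image compatible with e, b and b^2 at once. *)
Lemma compat_code_obstruction :
  all (fun v => compat_code (0, 0) (0, 0) (0, 2) v && compat_code (0, 1) (1, 1) (0, 2) v ==>
    has (fun y => all (fun u =>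
        compat_code (0, 0) (0, 0) y u && compat_code (0, 1) (1, 1) y u ==>
        ~~ compat_code (0, 2) v y u) codes) codes) codes.
Proof. by vm_compute. Qed.

Lemma SA_codesP c :
  c \in SA_codes -> exists2 B, B \in SA & forall x, (x \in B) = (code x \in c).
Proof.
rewrite !inE => /or4P[] /eqP->.
- by exists Z0; [rewrite !inE eqxx | exact: mem_Z0].
- by exists Z1; [rewrite !inE eqxx orbT | exact: mem_Z1].
- by exists Z2; [rewrite !inE eqxx !orbT | exact: mem_Z2].
- by exists Z3; [rewrite !inE eqxx !orbT | exact: mem_Z3].
Qed.

Lemma SA_codes_sub c : c \in SA_codes -> {subset c <= codes}.
Proof. by move=> cSA; apply/allP; move: c cSA; apply/allP. Qed.

Lemma basic_rel_code B c x y :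
    c \in SA_codes -> (forall z, (z \in B) = (code z \in c)) ->
  basic_rel m27_mul B x y <-> rel_code c (code x) (code y).
Proof.
move=> cSA memB; split=> [[d dB <-]|/hasP[p pc /eqP xy]].
  by apply/hasP; exists (code d); rewrite -?memB // code_mul.
have /code_elt_codes pE := SA_codes_sub cSA pc.
by exists (elt p.1 p.2); [rewrite memB pE | apply: code_inj; rewrite code_mul pE].
Qed.

Lemma compat_code_map (f : M27 -> M27) x y :
    (forall B, B \in SA -> basic_rel m27_mul B x y -> basic_rel m27_mul B (f x) (f y)) ->
  compat_code (code x) (code (f x)) (code y) (code (f y)).
Proof.
move=> fSA; apply/allP=> c cSA; apply/implyP.
have [B BSA memB] := SA_codesP cSA.
by move/(basic_rel_code _ _ cSA memB)/(fSA B BSA)/(basic_rel_code _ _ cSA memB).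
Qed.

Lemma no_SA_rel_map_b_ab (f : M27 -> M27) :
    f m27_e = m27_e -> f m27_b = elt 1 1 ->
  ~ (forall B x y, B \in SA -> basic_rel m27_mul B x y -> basic_rel m27_mul B (f x) (f y)).
Proof.
move=> fe fb fSA; pose w := elt 0 2.
have compat x y := compat_code_map (fun B => @fSA B x y).
have ce : code m27_e = (0, 0) by rewrite code_elt.
have cb : code m27_b = (0, 1) by rewrite code_elt.
have cab : code (elt 1 1) = (1, 1) by rewrite code_elt.
have cw : code w = (0, 2) by rewrite code_elt.
move/allP: compat_code_obstruction => /(_ _ (code_codes (f w))) /implyP.
have := compat m27_e w; rewrite fe ce cw => ->.
have := compat m27_b w; rewrite fb cb cab cw => ->.
move=> /(_ isT) /hasP[p pc /allP no_compat].
pose y := elt p.1 p.2; have cy : code y = p := code_elt_codes pc.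
move/implyP: (no_compat _ (code_codes (f y))).
have := compat m27_e y; rewrite fe ce cy => ->.
have := compat m27_b y; rewrite fb cb cab cy => ->.
by have := compat w y; rewrite cw cy => -> /(_ isT).
Qed.

Theorem proposition3p1 : ~ schurian m27_mul m27_e SA.
Proof.
move=> [Gamma [transl SAE]].
have Z3SA : Z3 \in SA by rewrite !inE eqxx !orbT.
have bZ3 : m27_b \in Z3 by rewrite mem_Z3 code_elt.
have abZ3 : elt 1 1 \in Z3 by rewrite mem_Z3 code_elt.
have [g /setIP[gG /astab1P ge] gb] := schurian_block_transitive SAE Z3SA bZ3 abZ3.
apply: (@no_SA_rel_map_b_ab g) => // B x y BSA.
exact: (schurian_basic_rel_perm m27_mul1x transl SAE gG BSA).
Qed.
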